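(* Let $n,m\in\mathbb{N}$ and $f:\mathbb{F}_2^n\to\mathbb{F}_2$. Then $f$ is $m$-bent if and only if $C^{(m)}_f(\mathbf{z})=0$ for all $\mathbf{z}\in\mathbb{F}_2^n\setminus\{0^n\}$ and $C^{(m)}_f(0^n)=2^n$.
   Context: $\zeta_m=e^{2\pi i/m}$; $wt$ is Hamming weight; $\mathbf{x}\cdot\mathbf{y}=\bigoplus_i x_iy_i\in\mathbb{F}_2$; $\mathbf{x}\odot\mathbf{y}=\sum_i x_iy_i$ computed in the integers. The $m$-Hadamard transform is $\mathcal{H}^{(m)}_f(\boldsymbol{\omega})=2^{-n/2}\sum_{\mathbf{x}\in\mathbb{F}_2^n}(-1)^{f(\mathbf{x})\oplus\mathbf{x}\cdot\boldsymbol{\omega}}\zeta_m^{wt(\mathbf{x})}$; $f$ is called $m$-bent if $|\mathcal{H}^{(m)}_f(\boldsymbol{\omega})|=1$ for all $\boldsymbol{\omega}\in\mathbb{F}_2^n$. The $m$-autocorrelation is $C^{(m)}_{f}(\mathbf{y})=\sum_{\mathbf{x}\in\mathbb{F}_2^n}(-1)^{f(\mathbf{x})\oplus f(\mathbf{x}\oplus\mathbf{y})}(\zeta_m^2)^{\mathbf{x}\odot\mathbf{y}}$. *)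

From mathcomp Require Import all_boot all_order all_algebra.
From mathcomp Require Import complex.
From mathcomp Require Import reals trigo.
Set Implicit Arguments. Unset Strict Implicit. Unset Printing Implicit Defensive.
Import Order.TTheory GRing.Theory Num.Theory.
Local Open Scope ring_scope.
Local Open Scope complex_scope.

Notation vec n := {ffun 'I_n -> bool}.

Definition vxor n (x y : vec n) : vec n := [ffun i => x i (+) y i].
Definition vdot n (x y : vec n) : bool := \big[addb/false]_(i < n) (x i && y i).
Definition vodot n (x y : vec n) : nat := (\sum_(i < n) (x i && y i))%N.
Definition wt n (x : vec n) : nat := (\sum_(i < n) x i)%N.
Definition vzero n : vec n := [ffun _ => false].

Definition zeta (R : realType) (m : nat) : R[i] :=
  (cos (2 * pi / m%:R))%:C + 'i * (sin (2 * pi / m%:R))%:C.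

Definition sgn (R : realType) (b : bool) : R[i] := (-1) ^+ b.

Definition mHadamard (R : realType) (m n : nat) (f : vec n -> bool) (w : vec n)
  : R[i] :=
  ((Num.sqrt (2 : R))^-1 ^+ n)%:C *
  \sum_(x : vec n) sgn R (f x (+) vdot x w) * zeta R m ^+ wt x.

Definition mbent (R : realType) (m n : nat) (f : vec n -> bool) : Prop :=
  forall w : vec n, `|mHadamard R m f w| = 1.

Definition mautocorr (R : realType) (m n : nat) (f : vec n -> bool) (y : vec n)
  : R[i] :=
  \sum_(x : vec n) sgn R (f x (+) f (vxor x y)) * (zeta R m ^+ 2) ^+ vodot x y.

(** The function [g x = (-1)^(f x) * zeta^(wt x)] turns the m-Hadamard
    transform of [f] into (a multiple of) the ordinary Walsh transform of [g].
    Since [wt x + wt y = wt (x + y) + 2 (x . y)] and [|zeta| = 1], the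
    m-autocorrelation of [f] at [y] is [zeta^(wt y)] times the ordinary
    autocorrelation of [g] at [y].  By the Wiener-Khinchin identity the
    squared Walsh spectrum of [g] is the Walsh transform of its
    autocorrelation, so the spectrum is flat (which is m-bentness) exactly
    when the autocorrelation is [2^n] at [0] and vanishes elsewhere. *)

From mathcomp Require Import all_boot all_order all_algebra.
From mathcomp Require Import complex.
From mathcomp Require Import reals trigo.
From mathcomp Require Import ring.
Set Implicit Arguments. Unset Strict Implicit. Unset Printing Implicit Defensive.
Import Order.TTheory GRing.Theory Num.Theory.
Local Open Scope ring_scope.

Section BooleanVectors.
Variable n : nat.
Implicit Types x y w : vec n.

Lemma vxorK x : involutive (vxor x).
Proof. by move=> y; apply/ffunP => i; rewrite !ffunE addKb. Qed.

Lemma vxor_inj x : injective (vxor x).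
Proof. exact: inv_inj (vxorK x). Qed.

Lemma vxor_eq0 x y : (vxor x y == vzero n) = (x == y).
Proof.
apply/eqP/eqP => [/ffunP xy0 | ->]; last by apply/ffunP => i; rewrite !ffunE addbb.
by apply/ffunP => i; move: (xy0 i); rewrite !ffunE; case: (x i) (y i) => [] [].
Qed.

Lemma vdotDl x y w : vdot (vxor x y) w = vdot x w (+) vdot y w.
Proof.
rewrite /vdot -big_split /=; apply: eq_bigr => i _; rewrite ffunE.
by case: (x i) (y i) (w i) => [] [] [].
Qed.

Lemma vdot0l w : vdot (vzero n) w = false.
Proof. by rewrite /vdot big1 // => i _; rewrite ffunE. Qed.

Lemma wt0 : wt (vzero n) = 0%N.
Proof. by rewrite /wt big1 // => i _; rewrite ffunE. Qed.

Lemma wtD x y : (wt x + wt y = wt (vxor x y) + 2 * vodot x y)%N.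
Proof.
rewrite /wt /vodot big_distrr -!big_split /=; apply: eq_bigr => i _.
by rewrite ffunE; case: (x i) (y i) => [] [].
Qed.

End BooleanVectors.

Lemma sum_sign_vdot (R : comNzRingType) n (y : vec n) :
  \sum_w (-1) ^+ vdot y w = (if y == vzero n then 2 ^+ n else 0) :> R.
Proof.
have sign_vdot w : (-1) ^+ vdot y w = \prod_i (-1) ^+ (y i && w i) :> R.
  rewrite /vdot; apply: (big_morph (fun b : bool => (-1) ^+ b : R)) => [a b|].
    exact: signr_addb.
  exact: expr0.
under eq_bigr do rewrite sign_vdot.
rewrite -(bigA_distr_bigA (fun i b => (-1) ^+ (y i && b) : R)) /=.
have [->|/eqP y_neq0] := eqVneq y (vzero n).
  under eq_bigr do rewrite big_bool ffunE.
  by rewrite prodr_const card_ord.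
have [i yi | y0] := pickP (fun i => y i); last first.
  by case: y_neq0; apply/ffunP => i; rewrite ffunE y0.
by rewrite (bigD1 i) //= big_bool yi /= expr1 expr0 addNr mul0r.
Qed.

Section WalshTransform.
Variables (C : numClosedFieldType) (n : nat).
Implicit Types (g : vec n -> C) (x y w : vec n).

Definition walsh g w : C := \sum_x g x * (-1) ^+ vdot x w.

Definition autocorr g y : C := \sum_x g x * (g (vxor x y))^*.

Lemma sqr_norm_walsh g w :
  `|walsh g w| ^+ 2 = \sum_y autocorr g y * (-1) ^+ vdot y w.
Proof.
have sign_sqr (b : bool) : (-1) ^+ b * (-1) ^+ b = 1 :> C by rewrite -expr2 sqrr_sign.
rewrite normCK rmorph_sum big_distrl /=.
transitivity (\sum_x \sum_y g x * (g (vxor x y))^* * (-1) ^+ vdot y w).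
  apply: eq_bigr => x _; rewrite big_distrr (reindex_inj (@vxor_inj n x)) /=.
  apply: eq_bigr => y _; rewrite rmorphM rmorph_sign vdotDl signr_addb.
  set s := (-1) ^+ vdot x w; set t := (-1) ^+ vdot y w.
  transitivity (g x * (g (vxor x y))^* * (s * s) * t); first by ring.
  by rewrite sign_sqr mulr1.
by rewrite exchange_big; apply: eq_bigr => y _; rewrite big_distrl.
Qed.

Lemma walsh_inversion_sqr_norm g y :
  \sum_w `|walsh g w| ^+ 2 * (-1) ^+ vdot y w = 2 ^+ n * autocorr g y.
Proof.
under eq_bigr do rewrite sqr_norm_walsh big_distrl /=.
rewrite exchange_big /=.
transitivity (\sum_z autocorr g z * (if vxor z y == vzero n then 2 ^+ n else 0)).
  apply: eq_bigr => z _; rewrite -sum_sign_vdot big_distrr /=.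
  by apply: eq_bigr => w _; rewrite vdotDl signr_addb mulrA.
rewrite (bigD1 y) //= big1 ?addr0 => [|z z_neq_y].
  by rewrite vxor_eq0 eqxx mulrC.
by rewrite vxor_eq0 (negbTE z_neq_y) mulr0.
Qed.

Lemma flat_walshP g :
  (forall w, `|walsh g w| ^+ 2 = 2 ^+ n) <->
  (forall y, autocorr g y = if y == vzero n then 2 ^+ n else 0).
Proof.
have two_neq0 : 2 ^+ n != 0 :> C by rewrite expf_neq0 // pnatr_eq0.
split=> [flat y | delta w].
  apply: (mulfI two_neq0); rewrite -walsh_inversion_sqr_norm.
  under eq_bigr do rewrite flat.
  by rewrite -big_distrr /= sum_sign_vdot; case: eqP.
rewrite sqr_norm_walsh (bigD1 (vzero n)) //= big1 ?addr0 => [|y y_neq0].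
  by rewrite delta eqxx vdot0l mulr1.
by rewrite delta (negbTE y_neq0) mul0r.
Qed.

End WalshTransform.

Lemma zeta_mul_conj (R : realType) m : zeta R m * (zeta R m)^* = 1.
Proof.
have := cos2Dsin2 (2 * pi / m%:R :> R); rewrite /zeta.
set c := cos _; set s := sin _ => c2Ds2.
apply/eqP; rewrite eq_complex /= !(mul0r, mul1r, mulr0, add0r, subr0, sub0r, addr0).
by rewrite mulrN opprK -!expr2 c2Ds2 mulrN mulrC addNr !eqxx.
Qed.

Lemma zeta_neq0 (R : realType) m : zeta R m != 0.
Proof.
apply/eqP => zeta0; have := zeta_mul_conj R m.
by rewrite zeta0 mul0r => /eqP; rewrite eq_sym oner_eq0.
Qed.

Section MHadamard.
Variables (R : realType) (m n : nat) (f : vec n -> bool).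

Definition mtwist x : R[i] := sgn R (f x) * zeta R m ^+ wt x.

Lemma mHadamardE w :
  mHadamard R m f w = ((Num.sqrt (2 : R))^-1 ^+ n)%:C%C * walsh mtwist w.
Proof.
congr (_ * _); apply: eq_bigr => x _.
by rewrite /sgn /mtwist signr_addb mulrAC.
Qed.

Lemma mautocorrE y : mautocorr R m f y = zeta R m ^+ wt y * autocorr mtwist y.
Proof.
rewrite /mautocorr /autocorr big_distrr; apply: eq_bigr => x _ /=.
rewrite /mtwist /sgn rmorphM rmorph_sign rmorphXn signr_addb.
set z := zeta R m.
have wt_twist : z ^+ wt x * z ^+ wt y * z^* ^+ wt (vxor x y) = (z ^+ 2) ^+ vodot x y.
  by rewrite -exprD wtD exprD exprM mulrAC -exprMn zeta_mul_conj expr1n mul1r.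
by rewrite -wt_twist; ring.
Qed.

Lemma mbentP : mbent R m f <-> forall w, `|walsh mtwist w| ^+ 2 = 2 ^+ n.
Proof.
have two_neq0 : 2 ^+ n != 0 :> R[i] by rewrite expf_neq0 // pnatr_eq0.
have sqr_norm_scale : `|((Num.sqrt (2 : R))^-1 ^+ n)%:C%C| ^+ 2 = (2 ^+ n)^-1 :> R[i].
  rewrite sqr_normc conjc_real -rmorphM -expr2 -exprM mulnC exprM exprVn.
  by rewrite sqr_sqrtr ?ler0n // -exprVn rmorphXn fmorphV rmorph_nat.
have flat w : (`|mHadamard R m f w| == 1) = (`|walsh mtwist w| ^+ 2 == 2 ^+ n).
  rewrite -sqrp_eq1 // mHadamardE normrM exprMn sqr_norm_scale.
  apply/eqP/eqP => [flat_w | ->]; last exact: mulVf.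
  by rewrite -(mulVKf two_neq0 (`|walsh mtwist w| ^+ 2)) flat_w mulr1.
by split=> flat_spectrum w; apply/eqP; [rewrite -flat | rewrite flat]; exact/eqP/flat_spectrum.
Qed.

Lemma mtwist_autocorr_deltaP :
  (forall y, autocorr mtwist y = if y == vzero n then 2 ^+ n else 0) <->
  (forall z, z != vzero n -> mautocorr R m f z = 0) /\
  mautocorr R m f (vzero n) = 2 ^+ n.
Proof.
have zeta_exp_neq0 k : zeta R m ^+ k != 0 by rewrite expf_neq0 // zeta_neq0.
rewrite mautocorrE wt0 mul1r; split=> [delta | [mautocorr_eq0 autocorr0] y].
  split=> [z z_neq0|]; last by rewrite delta eqxx.
  by rewrite mautocorrE delta (negbTE z_neq0) mulr0.
have [->|y_neq0] := eqVneq y (vzero n); first by rewrite autocorr0.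
by apply: (mulfI (zeta_exp_neq0 (wt y))); rewrite -mautocorrE mautocorr_eq0 // mulr0.
Qed.

End MHadamard.

Theorem theorem6 (R : realType) (n m : nat) (hm : (0 < m)%N)
    (f : {ffun 'I_n -> bool} -> bool) :
  mbent R m f <->
  ((forall z : {ffun 'I_n -> bool}, z != vzero n -> mautocorr R m f z = 0) /\
   mautocorr R m f (vzero n) = (2 : R[i]) ^+ n).
Proof.
split=> [/mbentP/flat_walshP/mtwist_autocorr_deltaP //|].
by move=> /mtwist_autocorr_deltaP/flat_walshP/mbentP.
Qed.
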